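(* Let $M_n$ be endowed with any norm, let $\phi: M_n\to M_n$ be a linear map that is contractive with respect to this norm, and let $\psi$ be an idempotent map ($\psi\circ\psi=\psi$) that is a limit point of the sequence of iterates $(\phi^k)_{k\ge1}$. Then \[ \lim_{k\to\infty}\|\phi^k-\phi^k\circ\psi\| = 0. \]
   Context: $M_n$ denotes the $n\times n$ complex matrices; $\phi^k$ is the $k$-fold composition of $\phi$ with itself; $\|\cdot\|$ is any norm on the space of linear maps $M_n\to M_n$. *)

From HB Require Import structures.
From mathcomp Require Import all_boot all_order all_algebra.
From mathcomp Require Import reals.
From mathcomp Require Export complex.
Set Implicit Arguments. Unset Strict Implicit. Unset Printing Implicit Defensive.
Import Order.TTheory GRing.Theory Num.Theory.
Local Open Scope ring_scope.

Definition is_norm (R : rcfType) (V : lmodType R[i]) (N : V -> R) : Prop :=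
  [/\ forall x : V, 0 <= N x,
      forall x : V, N x = 0 -> x = 0,
      forall (c : R[i]) (x : V), N (c *: x) = Normc.normc c * N x &
      forall x y : V, N (x + y) <= N x + N y].

(* A norm on the complex vector space of linear maps V -> V
   (maps represented as functions; the axioms only concern linear maps,
   with pointwise operations). *)
Definition is_map_norm (R : rcfType) (V : lmodType R[i])
    (Nop : (V -> V) -> R) : Prop :=
  [/\ forall f : V -> V, linear f -> 0 <= Nop f,
      forall f : V -> V, linear f -> Nop f = 0 -> forall x, f x = 0,
      forall (c : R[i]) (f : V -> V), linear f ->
        Nop (fun x => c *: f x) = Normc.normc c * Nop f &
      forall f g : V -> V, linear f -> linear g ->
        Nop (fun x => f x + g x) <= Nop f + Nop g].

Definition limit_point_of_iterates (R : rcfType) (V : lmodType R[i])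
    (Nop : (V -> V) -> R) (phi psi : V -> V) : Prop :=
  forall eps : R, 0 < eps -> forall K : nat, exists k : nat,
    [/\ (1 <= k)%N, (K <= k)%N &
        Nop (fun x => iter k phi x - psi x) < eps].

(* Pick k0 with phi^k0 close to psi and put E := phi^k0 - psi.  Since psi is
   idempotent, psi (X - psi X) = 0, so phi^k0 (X - psi X) = E (X - psi X) and,
   for k >= k0, phi^k (X - psi X) = phi^(k - k0) (E (X - psi X)).  By
   contractivity its norm is at most N (E (X - psi X)), which is O(Nop E)
   uniformly on the matrix units; a map norm of a linear map is controlled by
   the norms of its values on the matrix units, whence the claim.  The
   comparisons between N, Nop and coordinates are equivalences of norms in
   finite dimension: the only non-trivial one, that a norm dominates the
   coordinates, comes from the minimum of the norm on the (compact) unit sphere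
   of the sup norm, transported to complex matrices and to linear maps through
   their real coordinates. *)

From HB Require Import structures.
From mathcomp Require Import all_boot all_order all_algebra.
From mathcomp Require Import reals complex.
From mathcomp Require Import boolp classical_sets topology normedtype derive.
From mathcomp Require Import lra.
Set Implicit Arguments. Unset Strict Implicit. Unset Printing Implicit Defensive.
Import Order.TTheory GRing.Theory Num.Theory.
Import numFieldTopology.Exports numFieldNormedType.Exports.
Local Open Scope ring_scope.

Lemma subadditive_sum (V : nmodType) (R : numDomainType) (P : V -> R) :
  P 0 = 0 -> (forall x y, P (x + y) <= P x + P y) ->
  forall (I : Type) (r : seq I) (F : I -> V),
  P (\sum_(i <- r) F i) <= \sum_(i <- r) P (F i).
Proof.
move=> P0 PD I r F; elim/big_rec2: _ => [|i y x _ le_Px_y]; first by rewrite P0.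
by rewrite (le_trans (PD _ _)) // lerD2l.
Qed.

Lemma mx_entry_le_normr (R : realDomainType) (p q : nat)
    (x : 'M[R]_(p, q)) i j :
  `|x i j| <= `|x|.
Proof.
rewrite [leRHS]/Num.Def.normr /= mx_normrE.
by apply/bigmax_geP; right; exists (i, j).
Qed.

Section RealNormOnRows.
Variables (R : realType) (m : nat) (P : 'rV[R]_m -> R).
Hypotheses (P_ge0 : forall x, 0 <= P x) (P_eq0 : forall x, P x = 0 -> x = 0).
Hypothesis PZ : forall (r : R) x, P (r *: x) = `|r| * P x.
Hypothesis PD : forall x y, P (x + y) <= P x + P y.

Let P0 : P 0 = 0.
Proof. by rewrite -(scale0r 0) PZ normr0 mul0r. Qed.

Let P_dist x y : `|P x - P y| <= P (x - y).
Proof.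
have PN z : P (- z) = P z by rewrite -scaleN1r PZ normrN normr1 mul1r.
rewrite ler_norml; apply/andP; split.
  by have := PD (y - x) x; rewrite subrK -opprB PN; lra.
by have := PD (x - y) y; rewrite subrK; lra.
Qed.

Lemma norm_le_mx_norm x : P x <= `|x| * \sum_(j < m) P (delta_mx 0 j).
Proof.
rewrite {1}(row_sum_delta x) big_distrr.
apply: le_trans (subadditive_sum P0 PD _ _) _.
by apply: ler_sum => j _; rewrite PZ ler_wpM2r ?mx_entry_le_normr.
Qed.

Lemma continuous_norm_rV : continuous P.
Proof.
set M := \sum_(j < m) P (delta_mx 0 j).
have M1_gt0 : 0 < M + 1 by rewrite ltr_wpDl ?sumr_ge0.
move=> x; apply/(@cvgrPdist_lt _ _ _ (nbhs x)) => e e_gt0.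
apply/(@nbhs_normP R ('rV[R]_m : normedModType R)).
exists (e / (M + 1)); first by rewrite /= divr_gt0.
move=> y /= xy_lt; apply: le_lt_trans (P_dist _ _) _.
apply: le_lt_trans (norm_le_mx_norm _) _.
apply: (@le_lt_trans _ _ (`|x - y| * (M + 1))).
  by rewrite ler_wpM2l // lerDl.
by rewrite -ltr_pdivlMr.
Qed.

Lemma rV_coord_le_norm :
  exists2 c : R, 0 <= c & forall (x : 'rV[R]_m) i, `|x 0 i| <= c * P x.
Proof.
have [i0 _|noI] := pickP (fun _ : 'I_m => true); last first.
  by exists 0 => // x i; have := noI i.
set S := [set x : 'rV[R]_m | `|x| = 1]%classic.
have S_neq0 : (S !=set0)%classic.
  have d_neq0 : (delta_mx 0 i0 : 'rV[R]_m) != 0.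
    apply/eqP => /matrixP /(_ 0 i0).
    by rewrite !mxE !eqxx => /eqP; rewrite oner_eq0.
  exists (`|delta_mx 0 i0 : 'rV[R]_m|^-1 *: delta_mx 0 i0).
  by rewrite /S /= normrZ normfV normr_id mulVf // normr_eq0.
have S_compact : compact S.
  apply: bounded_closed_compact.
    by exists 1; split; [rewrite num_real | move=> y y1 x /= ->; apply: ltW].
  move: (@closed_eq R 1); apply: (proj1 (continuous_closedP _)).
  exact: (@norm_continuous _ ('rV[R]_m : normedModType R)).
have [x0 x0S x0_min] := compact_EVT_min S_neq0 S_compact
  (continuous_subspaceT continuous_norm_rV).
have Px0_gt0 : 0 < P x0.
  rewrite lt_def P_ge0 andbT; apply/eqP => /P_eq0 x0_eq0.
  by move: x0S; rewrite inE /S /= x0_eq0 normr0 => /eqP; rewrite eq_sym oner_eq0.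
exists (P x0)^-1 => [|x i]; first by rewrite invr_ge0 ltW.
apply: le_trans (mx_entry_le_normr x 0 i) _.
have [->|x_neq0] := eqVneq x 0; first by rewrite normr0 mulr_ge0 // invr_ge0 ltW.
have x_gt0 : 0 < `|x| by rewrite normr_gt0.
have := x0_min (`|x|^-1 *: x).
rewrite PZ normfV normr_id inE /S /= normrZ normfV normr_id mulVf ?gt_eqF //.
move=> /(_ erefl).
by rewrite mulrC ler_pdivlMr // -ler_pdivlMl // mulrC.
Qed.

End RealNormOnRows.

Lemma mx_coord_le_norm (R : realType) (p q : nat) (P : 'M[R]_(p, q) -> R) :
  (forall W, 0 <= P W) -> (forall W, P W = 0 -> W = 0) ->
  (forall (r : R) W, P (r *: W) = `|r| * P W) ->
  (forall W1 W2, P (W1 + W2) <= P W1 + P W2) ->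
  exists2 c : R, 0 <= c & forall (W : 'M[R]_(p, q)) i j, `|W i j| <= c * P W.
Proof.
move=> P_ge0 P_eq0 PZ PD.
have [|w|r w|w1 w2|c c_ge0 le_c] := @rV_coord_le_norm R (p * q) (P \o vec_mx).
- by move=> w; apply: P_ge0.
- by move=> /P_eq0 /(congr1 mxvec); rewrite vec_mxK linear0.
- by rewrite /= linearZ PZ.
- by rewrite /= linearD PD.
exists c => // W i j.
by have := le_c (mxvec W) (mxvec_index i j); rewrite mxvecE /= mxvecK.
Qed.

Section ComplexNorm.
Variable R : rcfType.
Implicit Types (x : R[i]) (r a b : R).

Lemma normc_real r : Normc.normc (r%:C)%C = `|r|.
Proof. by rewrite /Normc.normc /= expr0n /= addr0 sqrtr_sqr. Qed.

Lemma normc_Complex_le a b : Normc.normc (Complex a b) <= `|a| + `|b|.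
Proof.
rewrite /Normc.normc -(@ler_pXn2r _ 2) ?nnegrE ?sqrtr_ge0 ?addr_ge0 //.
rewrite sqr_sqrtr ?addr_ge0 ?sqr_ge0 // sqrrD !real_normK ?num_real //.
by rewrite -addrA lerD2l lerDr mulrn_wge0 // mulr_ge0.
Qed.

End ComplexNorm.

Section Realification.
Variables (R : rcfType) (n : nat).

Definition cmx_of_rV (w : 'rV[R]_(n * n + n * n)) : 'M[R[i]]_n :=
  \matrix_(k, l) Complex (w 0 (lshift _ (mxvec_index k l)))
                         (w 0 (rshift _ (mxvec_index k l))).

Definition rV_of_cmx (X : 'M[R[i]]_n) : 'rV[R]_(n * n + n * n) :=
  row_mx (mxvec (map_mx (@complex.Re R) X)) (mxvec (map_mx (@complex.Im R) X)).

Lemma cmx_of_rVD w1 w2 : cmx_of_rV (w1 + w2) = cmx_of_rV w1 + cmx_of_rV w2.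
Proof. by apply/matrixP => k l; rewrite !mxE. Qed.

Lemma cmx_of_rVZ (r : R) w : cmx_of_rV (r *: w) = (r%:C)%C *: cmx_of_rV w.
Proof.
apply/matrixP => k l; rewrite !mxE /=; apply/eqP.
by rewrite eq_complex /= !mul0r !subr0 !addr0 !eqxx.
Qed.

Lemma rV_of_cmxK : cancel rV_of_cmx cmx_of_rV.
Proof.
move=> X; apply/matrixP => k l.
by rewrite mxE row_mxEl row_mxEr !mxvecE !mxE; case: (X k l).
Qed.

Lemma cmx_of_rV_eq0 w : cmx_of_rV w = 0 -> w = 0.
Proof.
move=> /matrixP w0; apply/rowP => q; rewrite mxE.
have entry k l : Complex (w 0 (lshift _ (mxvec_index k l)))
                         (w 0 (rshift _ (mxvec_index k l))) = 0.
  by have := w0 k l; rewrite !mxE.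
case: (split_ordP q) => p ->; case/mxvec_indexP: p => k l.
  by case: (entry k l).
by case: (entry k l).
Qed.

End Realification.

Lemma cmx_entry_le_norm (R : realType) (n : nat) (N : 'M[R[i]]_n -> R) :
  is_norm N ->
  exists2 a : R, 0 <= a &
    forall (X : 'M[R[i]]_n) k l, Normc.normc (X k l) <= a * N X.
Proof.
case=> N_ge0 N_eq0 NZ ND.
have [|w|r w|w1 w2|c c_ge0 le_c] := @rV_coord_le_norm R _ (N \o @cmx_of_rV R n).
- by move=> w; apply: N_ge0.
- by move/N_eq0/cmx_of_rV_eq0.
- by rewrite /= cmx_of_rVZ NZ normc_real.
- by rewrite /= cmx_of_rVD ND.
exists (c + c) => [|X k l]; first by rewrite addr_ge0.
rewrite -[X]rV_of_cmxK mxE mulrDl (le_trans (normc_Complex_le _ _)) //.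
by rewrite lerD ?le_c.
Qed.

Section LinearFunctions.
Variables (K : comNzRingType) (U V W : lmodType K).
Implicit Types (f g : U -> V).

Lemma linB f : linear f -> {morph f : x y / x - y}.
Proof. exact: GRing.zmod_morphism_linear. Qed.

Lemma lin0 f : linear f -> f 0 = 0.
Proof. by move=> Lf; rewrite -(subrr 0) linB // subrr. Qed.

Lemma linD f : linear f -> {morph f : x y / x + y}.
Proof. by move=> Lf; case: (GRing.semilinear_linear Lf). Qed.

Lemma linZ f : linear f -> forall a, {morph f : x / a *: x}.
Proof. exact: GRing.scalable_linear. Qed.

Lemma lin_sum f (I : Type) (r : seq I) (F : I -> U) : linear f ->
  f (\sum_(i <- r) F i) = \sum_(i <- r) f (F i).
Proof. by move=> Lf; apply: (big_morph f (linD Lf) (lin0 Lf)). Qed.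

Lemma linear_subf f g : linear f -> linear g -> linear (fun x => f x - g x).
Proof.
by move=> Lf Lg a x y; rewrite Lf Lg scalerBr opprD addrACA.
Qed.

Lemma linear_sumf (I : Type) (r : seq I) (F : I -> U -> V) :
  (forall i, linear (F i)) -> linear (fun x => \sum_(i <- r) F i x).
Proof.
move=> LF a x y; rewrite scaler_sumr -big_split /=.
by apply: eq_bigr => i _; rewrite LF.
Qed.

Lemma linear_comp (f : V -> W) (g : U -> V) :
  linear f -> linear g -> linear (fun x => f (g x)).
Proof. by move=> Lf Lg a x y; rewrite Lg Lf. Qed.

End LinearFunctions.

Lemma linear_iter (K : comNzRingType) (U : lmodType K) (f : U -> U) k :
  linear f -> linear (iter k f).
Proof. by move=> Lf; elim: k => [|k IH] // a x y /=; rewrite IH Lf. Qed.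

Lemma linear_entry_scale (R : comNzRingType) (n : nat) (i j : 'I_n)
    (Y : 'M[R]_n) : linear (fun X : 'M[R]_n => X i j *: Y).
Proof. by move=> a X1 X2; rewrite !mxE scalerDl scalerA. Qed.

Lemma sum_delta_scale (R : pzRingType) (V : lmodType R) (n : nat)
    (i j : 'I_n) (F : 'I_n -> 'I_n -> V) :
  \sum_(k < n) \sum_(l < n) (delta_mx i j : 'M[R]_n) k l *: F k l = F i j.
Proof.
rewrite (bigD1 i) //= (bigD1 j) //= mxE !eqxx scale1r.
rewrite big1 => [|l /negbTE l_neq].
  rewrite addr0 big1 ?addr0 // => k /negbTE k_neq; apply: big1 => l _.
  by rewrite mxE k_neq scale0r.
by rewrite mxE eqxx l_neq scale0r.
Qed.

Section LinearMapRealification.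
Variables (R : rcfType) (n : nat).
Notation rmx := 'M[R]_(n * n, n * n + n * n).
Notation cmx := 'M[R[i]]_n.

(* Row [mxvec_index i j] of [W] holds the real coordinates of the image of
   [delta_mx i j]. *)
Definition linmap_of_rmx (W : rmx) (X : cmx) : cmx :=
  \sum_(i < n) \sum_(j < n) X i j *: cmx_of_rV (row (mxvec_index i j) W).

Definition rmx_of_linmap (G : cmx -> cmx) : rmx :=
  \matrix_r rV_of_cmx (G (vec_mx (delta_mx 0 r))).

Lemma linear_linmap_of_rmx W : linear (linmap_of_rmx W).
Proof.
by apply: linear_sumf => i; apply: linear_sumf => j; apply: linear_entry_scale.
Qed.

Lemma linmap_of_rmx_delta W i j :
  linmap_of_rmx W (delta_mx i j) = cmx_of_rV (row (mxvec_index i j) W).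
Proof. exact: sum_delta_scale. Qed.

Lemma linmap_of_rmxD W1 W2 :
  linmap_of_rmx (W1 + W2) = fun X => linmap_of_rmx W1 X + linmap_of_rmx W2 X.
Proof.
apply: funext => X; rewrite -big_split; apply: eq_bigr => i _.
rewrite -big_split.
by apply: eq_bigr => j _; rewrite /= linearD cmx_of_rVD scalerDr.
Qed.

Lemma linmap_of_rmxZ (r : R) W :
  linmap_of_rmx (r *: W) = fun X => (r%:C)%C *: linmap_of_rmx W X.
Proof.
apply: funext => X; rewrite scaler_sumr; apply: eq_bigr => i _.
rewrite scaler_sumr.
by apply: eq_bigr => j _; rewrite linearZ cmx_of_rVZ !scalerA mulrC.
Qed.

Lemma row_rmx_of_linmap G i j :
  row (mxvec_index i j) (rmx_of_linmap G) = rV_of_cmx (G (delta_mx i j)).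
Proof. by rewrite rowK vec_mx_delta. Qed.

Lemma rmx_of_linmapK G : linear G -> linmap_of_rmx (rmx_of_linmap G) = G.
Proof.
move=> LG; apply: funext => X; rewrite [in RHS](matrix_sum_delta X) lin_sum //.
apply: eq_bigr => i _; rewrite lin_sum //; apply: eq_bigr => j _.
by rewrite row_rmx_of_linmap rV_of_cmxK linZ.
Qed.

End LinearMapRealification.

Lemma linmap_entry_le_norm (R : realType) (n : nat)
    (Nop : ('M[R[i]]_n -> 'M[R[i]]_n) -> R) :
  is_map_norm Nop ->
  exists2 c : R, 0 <= c & forall G : 'M[R[i]]_n -> 'M[R[i]]_n, linear G ->
    forall i j k l, Normc.normc (G (delta_mx i j) k l) <= c * Nop G.
Proof.
case=> Nop_ge0 Nop_eq0 NopZ NopD.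
have [||r W|W1 W2|c c_ge0 le_c] :=
  @mx_coord_le_norm R _ _ (Nop \o @linmap_of_rmx R n).
- by move=> W; apply/Nop_ge0/linear_linmap_of_rmx.
- move=> W /(Nop_eq0 _ (linear_linmap_of_rmx W)) W0.
  apply/row_matrixP => r; rewrite row0; case/mxvec_indexP: r => i j.
  by apply: cmx_of_rV_eq0; rewrite -linmap_of_rmx_delta W0.
- by rewrite /= linmap_of_rmxZ NopZ ?normc_real //; apply: linear_linmap_of_rmx.
- by rewrite /= linmap_of_rmxD; apply: NopD; apply: linear_linmap_of_rmx.
exists (c + c) => [|G LG i j k l]; first by rewrite addr_ge0.
have le_cG r q : `|rmx_of_linmap G r q| <= c * Nop G.
  by rewrite -{2}(rmx_of_linmapK LG); apply: le_c.
rewrite -[G _]rV_of_cmxK -row_rmx_of_linmap.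
move: (rmx_of_linmap G) le_cG => W le_cW; rewrite !mxE mulrDl.
by apply: le_trans (normc_Complex_le _ _) _; rewrite lerD.
Qed.

Section Seminorm.
Variables (R : rcfType) (n : nat) (P : 'M[R[i]]_n -> R).
Hypothesis PZ : forall (c : R[i]) Y, P (c *: Y) = Normc.normc c * P Y.
Hypothesis PD : forall Y1 Y2, P (Y1 + Y2) <= P Y1 + P Y2.

Let P0 : P 0 = 0.
Proof. by rewrite -(scale0r 0) PZ Normc.normc0 mul0r. Qed.

Lemma seminorm_ge0 Y : 0 <= P Y.
Proof.
have := PD Y (- Y); rewrite subrr P0 -scaleN1r PZ normcN Normc.normc1 mul1r.
lra.
Qed.

Lemma seminorm_le_entries Y :
  P Y <= \sum_(k < n) \sum_(l < n) Normc.normc (Y k l) * P (delta_mx k l).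
Proof.
rewrite {1}(matrix_sum_delta Y); apply: le_trans (subadditive_sum P0 PD _ _) _.
apply: ler_sum => k _; apply: le_trans (subadditive_sum P0 PD _ _) _.
by apply: ler_sum => l _; rewrite PZ.
Qed.

Lemma seminorm_le_norm (N : 'M[R[i]]_n -> R) (a : R) :
  (forall (X : 'M[R[i]]_n) k l, Normc.normc (X k l) <= a * N X) ->
  forall Y, P Y <= a * (\sum_(k < n) \sum_(l < n) P (delta_mx k l)) * N Y.
Proof.
move=> le_a Y; apply: le_trans (seminorm_le_entries Y) _.
rewrite mulrAC !mulr_sumr; apply: ler_sum => k _; rewrite mulr_sumr.
by apply: ler_sum => l _; rewrite ler_wpM2r ?seminorm_ge0.
Qed.

End Seminorm.

Lemma map_norm_sum (R : rcfType) (n : nat)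
    (Nop : ('M[R[i]]_n -> 'M[R[i]]_n) -> R)
    (I : Type) (r : seq I) (F : I -> 'M[R[i]]_n -> 'M[R[i]]_n) :
  is_map_norm Nop -> (forall i, linear (F i)) ->
  Nop (fun X => \sum_(i <- r) F i X) <= \sum_(i <- r) Nop (F i).
Proof.
case=> _ _ NopZ NopD LF; elim: r => [|a r IH].
  have -> : (fun X => \sum_(i <- [::]) F i X) = (fun X => 0 *: X).
    by apply: funext => X; rewrite big_nil scale0r.
  by rewrite NopZ // Normc.normc0 mul0r big_nil.
have -> : (fun X => \sum_(i <- a :: r) F i X) =
          (fun X => F a X + \sum_(i <- r) F i X).
  by apply: funext => X; rewrite big_cons.
rewrite big_cons (le_trans (NopD _ _ _ _)) ?lerD2l //.
exact: linear_sumf.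
Qed.

Lemma map_norm_le_images (R : realType) (n : nat) (N : 'M[R[i]]_n -> R)
    (Nop : ('M[R[i]]_n -> 'M[R[i]]_n) -> R) :
  is_norm N -> is_map_norm Nop ->
  exists2 b : 'I_n -> 'I_n -> R, forall i j, 0 <= b i j &
    forall G, linear G ->
      Nop G <= \sum_(i < n) \sum_(j < n) b i j * N (G (delta_mx i j)).
Proof.
move=> HN HNop; have [Nop_ge0 _ NopZ NopD] := HNop.
have [a a_ge0 le_a] := cmx_entry_le_norm HN.
pose P i j Y := Nop (fun X : 'M[R[i]]_n => X i j *: Y).
have PZ i j c Y : P i j (c *: Y) = Normc.normc c * P i j Y.
  rewrite /P -NopZ; last exact: linear_entry_scale.
  by congr Nop; apply: funext => X; rewrite !scalerA mulrC.
have PD i j Y1 Y2 : P i j (Y1 + Y2) <= P i j Y1 + P i j Y2.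
  rewrite /P; have -> : (fun X : 'M[R[i]]_n => X i j *: (Y1 + Y2)) =
                        (fun X => X i j *: Y1 + X i j *: Y2).
    by apply: funext => X; rewrite scalerDr.
  by apply: NopD; apply: linear_entry_scale.
exists (fun i j => a * \sum_(k < n) \sum_(l < n) P i j (delta_mx k l)).
  move=> i j; rewrite mulr_ge0 // sumr_ge0 // => k _.
  rewrite sumr_ge0 // => l _.
  by apply: Nop_ge0; apply: linear_entry_scale.
move=> G LG.
have G_eq : G = fun X => \sum_(i < n) \sum_(j < n) X i j *: G (delta_mx i j).
  apply: funext => X; rewrite {1}(matrix_sum_delta X) lin_sum //.
  apply: eq_bigr => i _; rewrite lin_sum //.
  by apply: eq_bigr => j _; rewrite linZ.
rewrite {1}G_eq; apply: le_trans (map_norm_sum _ HNop _) _.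
  by move=> i; apply: linear_sumf => j; apply: linear_entry_scale.
apply: ler_sum => i _; apply: le_trans (map_norm_sum _ HNop _) _.
  by move=> j; apply: linear_entry_scale.
by apply: ler_sum => j _; apply: seminorm_le_norm.
Qed.

Lemma norm_apply_le (R : realType) (n : nat) (N : 'M[R[i]]_n -> R)
    (Nop : ('M[R[i]]_n -> 'M[R[i]]_n) -> R) :
  is_norm N -> is_map_norm Nop ->
  exists2 c : R, 0 <= c &
    forall E, linear E -> forall Z, N (E Z) <= c * N Z * Nop E.
Proof.
move=> HN HNop; have [N_ge0 _ NZ ND] := HN; have [Nop_ge0 _ _ _] := HNop.
have [a a_ge0 le_a] := cmx_entry_le_norm HN.
have [c c_ge0 le_c] := linmap_entry_le_norm HNop.
pose D := \sum_(k < n) \sum_(l < n) N (delta_mx k l).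
have D_ge0 : 0 <= D by rewrite sumr_ge0 // => k _; rewrite sumr_ge0.
exists (a * \sum_(k < n) \sum_(l < n) (c * D)) => [|E LE Z].
  rewrite mulr_ge0 // sumr_ge0 // => k _.
  by rewrite sumr_ge0 // => l _; rewrite mulr_ge0.
have NE_delta k l : N (E (delta_mx k l)) <= c * D * Nop E.
  apply: le_trans (seminorm_le_entries NZ ND _) _.
  rewrite mulrAC /D !mulr_sumr; apply: ler_sum => p _; rewrite mulr_sumr.
  by apply: ler_sum => q _; rewrite ler_wpM2r ?le_c.
have NE_Z := @seminorm_le_norm R n (fun Y => N (E Y)) _ _ N a le_a Z.
apply: le_trans (NE_Z _ _) _.
- by move=> x Y; rewrite /= linZ // NZ.
- by move=> Y1 Y2; rewrite /= linD // ND.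
rewrite [leRHS]mulrAC ler_wpM2r // -mulrA ler_wpM2l // mulr_suml.
by apply: ler_sum => k _; rewrite mulr_suml; apply: ler_sum => l _.
Qed.

Lemma iter_contraction (T : Type) (R : numDomainType) (N : T -> R)
    (f : T -> T) :
  (forall x, N (f x) <= N x) -> forall k x, N (iter k f x) <= N x.
Proof.
by move=> f_contr; elim=> [|k IH] x //=; apply: le_trans (f_contr _) _.
Qed.

Theorem mainTheorem7 (R : realType) (n : nat)
    (N : 'M[R[i]]_n -> R) (Nop : ('M[R[i]]_n -> 'M[R[i]]_n) -> R)
    (phi psi : 'M[R[i]]_n -> 'M[R[i]]_n) :
  is_norm N -> is_map_norm Nop ->
  linear phi -> (forall X, N (phi X) <= N X) ->
  linear psi -> (forall X, psi (psi X) = psi X) ->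
  limit_point_of_iterates Nop phi psi ->
  forall eps : R, 0 < eps -> exists K : nat, forall k : nat, (K <= k)%N ->
    Nop (fun X => iter k phi X - iter k phi (psi X)) < eps.
Proof.
move=> HN HNop Lphi phi_contr Lpsi psi_idem psi_lim eps eps_gt0.
have [[N_ge0 _ _ _] [Nop_ge0 _ _ _]] := (HN, HNop).
have [b b_ge0 Nop_le] := map_norm_le_images HN HNop.
have [c c_ge0 N_apply_le] := norm_apply_le HN HNop.
pose Z i j := delta_mx i j - psi (delta_mx i j).
pose B := \sum_(i < n) \sum_(j < n) b i j * (c * N (Z i j)).
have B_ge0 : 0 <= B.
  by rewrite sumr_ge0 // => i _; rewrite sumr_ge0 // => j _; rewrite !mulr_ge0.
have B1_gt0 : 0 < B + 1 by rewrite ltr_wpDl.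
have [k0 [_ _ E_lt]] := psi_lim (eps / (B + 1)) (divr_gt0 eps_gt0 B1_gt0) 0%N.
set E := fun X => iter k0 phi X - psi X in E_lt.
have LE : linear E := linear_subf (linear_iter k0 Lphi) Lpsi.
exists k0 => k le_k0k.
have iter_Z i j : iter k phi (delta_mx i j) - iter k phi (psi (delta_mx i j)) =
    iter (k - k0) phi (E (Z i j)).
  rewrite -(linB (linear_iter k Lphi)) -(subnK le_k0k) iterD addnK /E /Z.
  by rewrite (linB Lpsi) psi_idem subrr subr0.
apply: le_lt_trans (Nop_le _ _) _.
  by apply: linear_subf; [|apply: linear_comp => //]; apply: linear_iter.
apply: (@le_lt_trans _ _ (B * Nop E)).
  rewrite /B mulr_suml; apply: ler_sum => i _.
  rewrite mulr_suml; apply: ler_sum => j _.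
  rewrite -!mulrA ler_wpM2l // iter_Z mulrA.
  exact: le_trans (iter_contraction phi_contr _ _) (N_apply_le _ LE _).
have : B * (eps / (B + 1)) < eps by rewrite mulrA ltr_pdivrMr //; lra.
by apply: le_lt_trans; rewrite ler_wpM2l // ltW.
Qed.
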